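(* Let $G=(V,E,s_0,s_1)$ be a switch graph and $o,d\in V$ with $o\neq d$. If there exists a switching flow $\mathbf{x}$, then $\textsc{Run}(G,o,d)$ terminates, and its run profile satisfies $\mathbf{x}(G,o,d)\le\mathbf{x}$ componentwise.
   Context: A switch graph is a 4-tuple $G=(V,E,s_0,s_1)$ where $V$ is a finite vertex set, $s_0,s_1:V\to V$, and $E=\{(v,s_0(v)):v\in V\}\cup\{(v,s_1(v)):v\in V\}$ (loops allowed; possibly $s_0(v)=s_1(v)$). The procedure $\textsc{Run}(G,o,d)$: maintain arrays $\mathtt{s\_curr},\mathtt{s\_next}$ indexed by $V$, initially $\mathtt{s\_curr}[v]=s_0(v)$, $\mathtt{s\_next}[v]=s_1(v)$; set $v:=o$; while $v\neq d$: $w:=\mathtt{s\_curr}[v]$, swap $\mathtt{s\_curr}[v],\mathtt{s\_next}[v]$, $v:=w$ (traversing edge $(v,w)$). When the run terminates, its run profile $\mathbf{x}(G,o,d):E\to\mathbb{N}_0$ assigns to each edge the number of times it was traversed. For $v\in V$, $E^+(v)$ and $E^-(v)$ denote the outgoing and incoming edges of $v$. A switching flow is a function $\mathbf{x}:E\to\mathbb{N}_0$, $e\mapsto x_e$, such that for all $v\in V$: (a) $\sum_{e\in E^+(v)}x_e-\sum_{e\in E^-(v)}x_e$ equals $1$ if $v=o$, $-1$ if $v=d$, and $0$ otherwise; and (b) $0\le x_{(v,s_1(v))}\le x_{(v,s_0(v))}\le x_{(v,s_1(v))}+1$. *)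

From mathcomp Require Import all_boot all_order all_algebra.
Set Implicit Arguments. Unset Strict Implicit. Unset Printing Implicit Defensive.
Import GRing.Theory Num.Theory.

Section SwitchGraph.
Variable V : finType.

(* A switch graph G = (V, E, s0, s1) is given by V and the two switch maps;
   its edge set E is determined by s0 and s1. Edges are pairs (v, w). *)
Definition switch_edges (s0 s1 : V -> V) : {set V * V} :=
  [set (v, s0 v) | v in V] :|: [set (v, s1 v) | v in V].

(* Switching flow x : E -> N (given as a function on V*V, only its values on E matter). *)
Definition is_switching_flow (s0 s1 : V -> V) (o d : V) (x : V * V -> nat) : Prop :=
  (forall v : V,
      ((\sum_(e in switch_edges s0 s1 | e.1 == v) x e)%:Z
       - (\sum_(e in switch_edges s0 s1 | e.2 == v) x e)%:Z)%R
      = ((nat_of_bool (v == o))%:Z - (nat_of_bool (v == d))%:Z)%R)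
  /\ (forall v : V, x (v, s1 v) <= x (v, s0 v) <= (x (v, s1 v)).+1).

Record run_state := RunState { rs_pos : V; rs_curr : V -> V; rs_next : V -> V }.

Definition run_step (s : run_state) : run_state :=
  let v := rs_pos s in
  RunState (rs_curr s v)
    (fun u => if u == v then rs_next s v else rs_curr s u)
    (fun u => if u == v then rs_curr s v else rs_next s u).

Definition run_init (s0 s1 : V -> V) (o : V) : run_state := RunState o s0 s1.

(* Vertex after k loop iterations (ignoring the loop guard). *)
Definition run_pos (s0 s1 : V -> V) (o : V) (k : nat) : V :=
  rs_pos (iter k run_step (run_init s0 s1 o)).

Definition run_terminates_at (s0 s1 : V -> V) (o d : V) (n : nat) : Prop :=
  run_pos s0 s1 o n = d /\ (forall k, k < n -> run_pos s0 s1 o k != d).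

Definition run_profile (s0 s1 : V -> V) (o : V) (n : nat) (e : V * V) : nat :=
  \sum_(k < n) ((run_pos s0 s1 o k, run_pos s0 s1 o k.+1) == e).

End SwitchGraph.

(** Each departure from [v] alternates between [s0 v] and [s1 v], so after
    [c] departures the two out-edges carry [uphalf c] and [c./2] traversals;
    conditions (b) on [x] make these bounds hold as soon as [c] is at most
    the [x]-outflow of [v].  Every departure from [v <> d] follows an arrival
    at [v] (or the start at [o]), and arrivals are bounded by the [x]-inflow,
    which by conservation (a) is the [x]-outflow minus [v == o].  Hence the
    run profile stays below [x] while [d] is not reached, and since the run
    profile after [n] steps sums to [n], the run reaches [d] within
    [\sum_e x e] steps. *)
From mathcomp Require Import all_boot all_order all_algebra.
From mathcomp Require Import zify.
Set Implicit Arguments. Unset Strict Implicit. Unset Printing Implicit Defensive.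

Lemma halves_le_switching_bound (c x0 x1 : nat) :
  x1 <= x0 <= x1.+1 -> c <= x0 + x1 -> uphalf c <= x0 /\ c./2 <= x1.
Proof.
move=> /andP [x10 x01] cx; rewrite uphalf_half.
by have := odd_double_half c; case: odd => /= c2; lia.
Qed.

Lemma sum_eq_in (T : finType) (A : {set T}) (P : pred T) (t : T) :
  t \in A -> \sum_(e in A | P e) (t == e) = P t.
Proof.
move=> tA; case Pt: (P t).
- rewrite (bigD1 t) ?tA ?Pt //= eqxx big1 // => e /andP [_ ne].
  by rewrite eq_sym (negbTE ne).
- by rewrite big1 // => e /andP [_ Pe]; case: eqP => // te; rewrite te Pe in Pt.
Qed.

Section SwitchEdges.
Variables (V : finType) (s0 s1 : V -> V).
Local Notation E := (switch_edges s0 s1).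

Lemma mem_switch_edges (e : V * V) : (e \in E) = (e.2 == s0 e.1) || (e.2 == s1 e.1).
Proof.
case: e => a b /=; rewrite /switch_edges inE.
apply/orP/orP => [[] /imsetP [u _ [-> ->]]|[] /eqP ->]; rewrite ?eqxx; auto.
- by left; apply/imsetP; exists a.
- by right; apply/imsetP; exists a.
Qed.

Lemma sum_out_edges (x : V * V -> nat) (v : V) :
  \sum_(e in E | e.1 == v) x e =
  if s0 v == s1 v then x (v, s0 v) else x (v, s0 v) + x (v, s1 v).
Proof.
rewrite (bigD1 (v, s0 v)) /=; last by rewrite mem_switch_edges /= !eqxx.
case: eqP => [eqs|neq].
- rewrite big1 ?addn0 // => -[a b] /= /andP [/andP [+ /eqP av] ne]; subst a.
  by rewrite mem_switch_edges /= -eqs orbb => /eqP be; rewrite be eqxx in ne.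
- rewrite (bigD1 (v, s1 v)) /=; last first.
    by rewrite mem_switch_edges /= eqxx orbT xpair_eqE eqxx /=; apply/eqP => /esym.
  rewrite big1 ?addn0 // => -[a b] /= /andP [/andP [/andP [+ /eqP av] ne0] ne1].
  by subst a; rewrite mem_switch_edges /= => /orP [] /eqP be;
    rewrite be eqxx in ne0 ne1.
Qed.

Lemma switching_flow_out_in (o d : V) (x : V * V -> nat) (v : V) :
  is_switching_flow s0 s1 o d x -> v != d ->
  \sum_(e in E | e.1 == v) x e = (v == o) + \sum_(e in E | e.2 == v) x e.
Proof. by move=> [+ _] vd => /(_ v); rewrite (negbTE vd); case: (v == o) => /=; lia. Qed.

End SwitchEdges.

Section Run.
Variables (V : finType) (s0 s1 : V -> V) (o : V).
Local Notation E := (switch_edges s0 s1).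
Local Notation pos := (run_pos s0 s1 o).
Local Notation profile := (run_profile s0 s1 o).

Definition visits (n : nat) (v : V) : nat := \sum_(k < n) (pos k == v).

Lemma visitsS n v : visits n.+1 v = visits n v + (pos n == v).
Proof. by rewrite /visits big_ord_recr. Qed.

Lemma run_profileS n e : profile n.+1 e = profile n e + ((pos n, pos n.+1) == e).
Proof. by rewrite /run_profile big_ord_recr. Qed.

Lemma run_switches n :
  let s := iter n (@run_step V) (run_init s0 s1 o) in
  (forall v, rs_curr s v = if odd (visits n v) then s1 v else s0 v) /\
  (forall v, rs_next s v = if odd (visits n v) then s0 v else s1 v).
Proof.
elim: n => [|n [IHc IHn]]; first by split=> v; rewrite /visits big_ord0.
split=> v; rewrite visitsS /run_pos /=.
all: case: eqVneq => [->|nv]; rewrite ?eqxx ?addn1 ?addn0 /= ?IHc ?IHn //.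
all: by case: odd.
Qed.

Lemma run_posS n :
  pos n.+1 = if odd (visits n (pos n)) then s1 (pos n) else s0 (pos n).
Proof. exact: (run_switches n).1. Qed.

Lemma run_step_edge n : (pos n, pos n.+1) \in E.
Proof. by rewrite mem_switch_edges /= run_posS; case: odd; rewrite eqxx ?orbT. Qed.

Lemma run_profile_loop n v : s0 v = s1 v -> profile n (v, s0 v) = visits n v.
Proof.
move=> eqs; elim: n => [|n IH]; first by rewrite /run_profile /visits !big_ord0.
rewrite run_profileS visitsS run_posS IH xpair_eqE.
by case: eqVneq => [->|]; rewrite ?eqxx // -eqs if_same eqxx.
Qed.

Lemma run_profile_switch n v : s0 v != s1 v ->
  profile n (v, s0 v) = uphalf (visits n v) /\ profile n (v, s1 v) = (visits n v)./2.
Proof.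
move=> neq; elim: n => [|n [IH0 IH1]]; first by rewrite /run_profile /visits !big_ord0.
rewrite !run_profileS visitsS run_posS IH0 IH1 !xpair_eqE.
case: eqVneq => [->|_]; last by rewrite !addn0.
rewrite addn1 /= uphalf_half.
by case: odd; rewrite /= ?eqxx ?(negbTE neq) 1?eq_sym ?(negbTE neq) addn0 ?addn1.
Qed.

Lemma visits_arrivals n v :
  visits n.+1 v = (o == v) + \sum_(e in E | e.2 == v) profile n e.
Proof.
rewrite /visits big_ord_recl /run_profile exchange_big /=; congr (_ + _).
by apply: eq_bigr => k _; rewrite (sum_eq_in (fun e : V * V => e.2 == v)) ?run_step_edge.
Qed.

Lemma sum_run_profile n : \sum_(e in E) profile n e = n.
Proof.
rewrite /run_profile exchange_big /= -[n in RHS]card_ord -sum1_card.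
apply: eq_bigr => k _; have := sum_eq_in xpredT (run_step_edge k).
by under eq_bigl do rewrite andbT.
Qed.

Lemma run_profile_out_le n v (x : V * V -> nat) :
  x (v, s1 v) <= x (v, s0 v) <= (x (v, s1 v)).+1 ->
  visits n v <= \sum_(e in E | e.1 == v) x e ->
  forall e, e \in E -> e.1 = v -> profile n e <= x e.
Proof.
rewrite sum_out_edges => xb nx [a b] + /= av; subst a.
rewrite mem_switch_edges /= => /orP [] /eqP ->.
all: case: eqVneq nx => [eqs|neq] nx.
1,3: by rewrite -?eqs run_profile_loop.
all: have [p0 p1] := run_profile_switch n neq.
all: rewrite ?p0 ?p1; by have [] := halves_le_switching_bound xb nx.
Qed.

Lemma run_profile_le_flow (d : V) (x : V * V -> nat) n :
  is_switching_flow s0 s1 o d x -> (forall k, k < n -> pos k != d) ->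
  forall e, e \in E -> profile n e <= x e.
Proof.
move=> flow; elim: n => [|n IH] notd e eE; first by rewrite /run_profile big_ord0.
have {}IH e' : e' \in E -> profile n e' <= x e'.
  by apply: IH => k kn; apply: notd; apply: ltnW.
have [ev|ne] := eqVneq e.1 (pos n); last first.
  by rewrite run_profileS; case: eqP => [ep|_]; [rewrite -ep eqxx in ne | rewrite addn0 IH].
apply: (run_profile_out_le (n := n.+1) (flow.2 (pos n)) _ eE ev).
rewrite (switching_flow_out_in flow (notd n _)) // visits_arrivals eq_sym.
by rewrite leq_add2l; apply: leq_sum => e' /andP [/IH].
Qed.

End Run.

Theorem lemma1 (V : finType) (s0 s1 : V -> V) (o d : V) :
  o != d ->
  forall x : V * V -> nat, is_switching_flow s0 s1 o d x ->
  exists n : nat, run_terminates_at s0 s1 o d n /\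
    (forall e, e \in switch_edges s0 s1 -> run_profile s0 s1 o n e <= x e).
Proof.
move=> _ x flow.
have reach_d : exists k, run_pos s0 s1 o k == d.
  set m := (\sum_(e in switch_edges s0 s1) x e).+1.
  case: (boolP [exists k : 'I_m, run_pos s0 s1 o k == d]) => [/existsP [k at_k]|/existsPn notd].
    by exists k.
  have : \sum_(e in switch_edges s0 s1) run_profile s0 s1 o m e < m.
    rewrite ltnS; apply: leq_sum; apply: (run_profile_le_flow flow) => k km.
    exact: notd (Ordinal km).
  by rewrite sum_run_profile ltnn.
have [n /eqP at_d first_d] := ex_minnP reach_d.
have notd k : k < n -> run_pos s0 s1 o k != d.
  by move=> kn; apply: contraTneq kn => at_k; rewrite -leqNgt first_d ?at_k.
by exists n; split; [split | apply: run_profile_le_flow flow notd].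
Qed.
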